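(* Let $f:\mathbb{R}\to\mathbb{R}\cup\{\pm\infty\}$ be a proper concave function such that $f(\delta)\le0$ and $\partial f(\delta)\cap\mathbb{R}_{<0}\ne\emptyset$ for some $\delta\in\operatorname{dom}(f)$, and such that $f$ has a root or attains its maximum; let $\delta^*:=\max(\{\delta:f(\delta)=0\}\cup\operatorname{argmax}f)$. Run the (standard) Newton–Dinkelbach method described in the context. Then for every iteration $i\ge2$, $D_f(\delta^*,\delta^{(i)})\le D_f(\delta^*,\delta^{(i-1)})$, and equality holds if and only if $g^{(i-1)}=\inf_{g\in\partial f(\delta^{(i-1)})}g$ and $f(\delta^{(i)})=0$.
   Context: $\operatorname{dom}(f):=\{x:-\infty<f(x)<\infty\}$; $\partial f(x_0):=\{g: f(x)\le f(x_0)+g(x-x_0)\ \forall x\in\mathbb{R}\}$. Bregman divergence: $D_f(\delta',\delta):=f(\delta)+\sup_{g\in\partial f(\delta)}g(\delta'-\delta)-f(\delta')$ if $\delta\ne\delta'$, and $0$ if $\delta=\delta'$ (for $\delta,\delta'\in\operatorname{dom}(f)$, $\partial f(\delta)\ne\emptyset$). Newton–Dinkelbach method: input $\delta^{(1)}\in\operatorname{dom}(f)$, $g^{(1)}\in\partial f(\delta^{(1)})$ with $f(\delta^{(1)})\le0$, $g^{(1)}<0$. At iteration $i$: if $f(\delta^{(i)})=0$ return $\delta^{(i)}$; otherwise $\delta:=\delta^{(i)}-f(\delta^{(i)})/g^{(i)}$ and some $g\in\partial f(\delta)$ from an oracle; if $f(\delta)=-\infty$, or $f(\delta)<0$ and $g\ge0$,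 report no root; otherwise $\delta^{(i+1)}:=\delta$, $g^{(i+1)}:=g$. *)

From HB Require Import structures.
From mathcomp Require Import all_boot all_order all_algebra.
From mathcomp Require Import all_classical all_reals ereal.
Set Implicit Arguments. Unset Strict Implicit. Unset Printing Implicit Defensive.
Import Order.TTheory GRing.Theory Num.Theory.
Local Open Scope classical_set_scope.
Local Open Scope ring_scope.

Section ND.
Variable R : realType.
Implicit Types (f : R -> \bar R).

Definition edom f : set R := [set x | f x \is a fin_num].

(* Concave (hypograph-convex) extended-real-valued function; the endpoint
   cases t = 0, 1 are trivial and omitted. *)
Definition econcave f : Prop :=
  forall (x y t : R), (0 < t < 1)%R ->
    (t%:E * f x + ((1 - t)%R)%:E * f y <= f (t * x + (1 - t) * y)%R)%E.

Definition eproper f : Prop :=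
  (forall x, f x != +oo%E) /\ (exists x, f x != -oo%E).

Definition superdiff f (x0 : R) : set R :=
  [set g | forall x, (f x <= f x0 + (g * (x - x0))%:E)%E].

Definition bregman f (d' d : R) : \bar R :=
  if d == d' then 0%E
  else (f d + ereal_sup [set (g * (d' - d))%:E | g in superdiff f d] - f d')%E.

Definition argmax f : set R := [set x | forall y, (f y <= f x)%E].

(* One iteration j of Newton--Dinkelbach that does not terminate and produces
   delta^(j+1), g^(j+1) (g^(j+1) being an arbitrary oracle answer). *)
Definition ND_step f (d g : nat -> R) (j : nat) : Prop :=
  [/\ f (d j) != 0%E,
      d j.+1 = d j - fine (f (d j)) / g j,
      superdiff f (d j.+1) (g j.+1),
      f (d j.+1) != -oo%E &
      ~ ((f (d j.+1) < 0)%E /\ (0 <= g j.+1)%R)].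

Definition ND_run_upto f (d g : nat -> R) (i : nat) : Prop :=
  [/\ edom f (d 1%N), superdiff f (d 1%N) (g 1%N), (f (d 1%N) <= 0)%E,
      (g 1%N < 0)%R &
      forall j : nat, (1 <= j)%N -> (j < i)%N -> ND_step f d g j].

End ND.

From HB Require Import structures.
From mathcomp Require Import all_boot all_order all_algebra.
From mathcomp Require Import all_classical all_reals ereal.
From mathcomp Require Import ring lra.

(* Each iterate is the root of the supergradient line of the previous one, and
   this line majorizes f.  Hence f(delta^(i)) <= 0, delta^(i) < delta^(i-1),
   every supergradient at delta^(i) is at least g^(i-1), and dstar <= delta^(i):
   otherwise f(dstar) < 0 makes dstar a maximizer, the halting test forces
   g^(i) < 0, and then f(dstar) < f(delta^(i)).
   If f(delta^(i)) < 0, bounding the supremum in D_f(dstar, delta^(i)) via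
   g^(i-1) and the one in D_f(dstar, delta^(i-1)) by g^(i-1) itself gives
     D_f(dstar, delta^(i)) <= f(delta^(i)) + g^(i-1)(dstar - delta^(i)) - f(dstar)
                           <  g^(i-1)(dstar - delta^(i)) - f(dstar)
                           <= D_f(dstar, delta^(i-1)).
   If f(delta^(i)) = 0, then delta^(i) = dstar and the divergence at delta^(i-1)
   is nonnegative, vanishing exactly when g^(i-1) is the least supergradient. *)
Set Implicit Arguments. Unset Strict Implicit. Unset Printing Implicit Defensive.
Import Order.TTheory GRing.Theory Num.Theory.
Local Open Scope classical_set_scope.
Local Open Scope ring_scope.

Section ErealInfSup.
Variable R : realType.
Implicit Types (S : set R) (G c : R).

Lemma EFin_ereal_inf_min S G : S G ->
  G%:E = ereal_inf [set h%:E | h in S] <-> forall h, S h -> G <= h.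
Proof.
move=> SG; split=> [Einf h Sh | Gmin].
  by rewrite -lee_fin Einf; apply: ereal_inf_lbound; exists h.
apply/le_anti/andP; split.
  by apply: le_ereal_inf_tmp => _ [h Sh <-]; rewrite lee_fin Gmin.
by apply: ereal_inf_lbound; exists G.
Qed.

Lemma ereal_sup_mulr_neg S G c : S G -> c < 0 -> (forall h, S h -> G <= h) ->
  ereal_sup [set (h * c)%:E | h in S] = (G * c)%:E.
Proof.
move=> SG c_lt0 Gmin; apply/le_anti/andP; split.
  apply: ge_ereal_sup => _ [h Sh <-].
  by rewrite lee_fin; have := Gmin h Sh; nra.
by apply: ereal_sup_ubound; exists G.
Qed.

End ErealInfSup.

Section Supergradients.
Variables (R : realType) (f : R -> \bar R).

Lemma eproper_fin x : eproper f -> f x != -oo%E -> f x \is a fin_num.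
Proof. by case=> /(_ x) + _; rewrite fin_numE => -> ->. Qed.

Lemma eproper_root_or_argmax_fin s : eproper f ->
  ([set x | f x = 0%E] `|` argmax f) s -> f s \is a fin_num.
Proof.
move=> fP [/= ->|s_max] //; apply: eproper_fin => //.
have [_ [x /negPf fx]] := fP; apply: contraTN (s_max x) => /eqP ->.
by rewrite leeNy_eq fx.
Qed.

Lemma superdiff_anti a b fa fb G h : f a = fa%:E -> f b = fb%:E ->
  superdiff f a G -> superdiff f b h -> b < a -> G <= h.
Proof.
move=> Efa Efb Ga Hb ba.
have := Ga b; have := Hb a; rewrite Efa Efb -!EFinD !lee_fin.
nra.
Qed.

Lemma superdiff_newton a fa G : f a = fa%:E -> G != 0 -> superdiff f a G ->
  forall x, (f x <= (G * (x - (a - fa / G)))%:E)%E.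
Proof.
move=> Efa G_neq0 Ga x; have := Ga x; rewrite Efa -EFinD.
by have -> : fa + G * (x - a) = G * (x - (a - fa / G)) by field.
Qed.

Lemma bregman_ge_superdiff s a fa fs G : a != s -> f a = fa%:E -> f s = fs%:E ->
  superdiff f a G -> (((fa + G * (s - a)) - fs)%:E <= bregman f s a)%E.
Proof.
move=> a_neq_s Efa Efs Ga; rewrite /bregman (negPf a_neq_s) Efa Efs.
rewrite EFinB EFinD leeB // leeD2l //.
by apply: ereal_sup_ubound; exists G.
Qed.

Lemma bregman_le_superdiff s b fb fs G : s < b -> f b = fb%:E -> f s = fs%:E ->
  (forall h, superdiff f b h -> G <= h) ->
  (bregman f s b <= ((fb + G * (s - b)) - fs)%:E)%E.
Proof.
move=> sb Efb Efs Gmin; rewrite /bregman gt_eqF // Efb Efs.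
rewrite EFinB EFinD leeB // leeD2l //.
apply: ge_ereal_sup => _ [h Hh <-]; rewrite lee_fin.
by have := Gmin h Hh; nra.
Qed.

Definition ND_invariant (x h : R) : Prop :=
  [/\ f x \is a fin_num, (f x <= 0)%E, superdiff f x h &
      ((f x < 0)%E -> h < 0)].

Section Run.
Variables (d g : nat -> R).
Hypothesis fP : eproper f.

Lemma ND_step_invariant j : ND_invariant (d j) (g j) -> ND_step f d g j ->
  ND_invariant (d j.+1) (g j.+1).
Proof.
move=> [fin_j le0_j Gj Gj_lt0] [fj_neq0 Ed Gj1 fj1_neqNy no_halt].
have fj_lt0 : (f (d j) < 0)%E by rewrite lt_neqAle fj_neq0.
have le0_j1 : (f (d j.+1) <= 0)%E.
  have := superdiff_newton (esym (fineK fin_j)) (ltr0_neq0 (Gj_lt0 fj_lt0)) Gj.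
  by move=> /(_ (d j.+1)); rewrite -Ed subrr mulr0.
split=> // [|fj1_lt0]; first exact: eproper_fin.
by rewrite ltNge; apply/negP => Gj1_ge0; apply: no_halt.
Qed.

Lemma ND_run_invariant i : ND_run_upto f d g i ->
  forall j, (0 < j <= i)%N -> ND_invariant (d j) (g j).
Proof.
move=> [fin1 G1 le1 G1_lt0 steps]; elim=> [//|[|j] IH /andP[_ ji]].
  by split.
apply: ND_step_invariant; last exact: steps.
by apply: IH; rewrite /= ltnW.
Qed.

End Run.

Section NewtonStep.
Variables (a b s G h fa fb fs : R).
Hypotheses (Efa : f a = fa%:E) (Efb : f b = fb%:E) (Efs : f s = fs%:E).
Hypotheses (fa_lt0 : fa < 0) (G_lt0 : G < 0) (Ga : superdiff f a G).
Hypotheses (Eb : b = a - fa / G) (inv_b : ND_invariant b h).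
Hypotheses (s_root_or_max : ([set x | f x = 0%E] `|` argmax f) s)
  (s_maximal : forall x, ([set x | f x = 0%E] `|` argmax f) x -> x <= s).

Let newton_tangent x : (f x <= (G * (x - b))%:E)%E.
Proof. by rewrite Eb; apply: superdiff_newton => //; rewrite ltr0_neq0. Qed.

Let newton_lt : b < a.
Proof.
have : 0 < fa / G by rewrite nmulr_rgt0 // invr_lt0.
rewrite Eb; lra.
Qed.

Let tangent_at_a : fa + G * (s - a) = G * (s - b).
Proof. by rewrite Eb; field; rewrite ltr0_neq0. Qed.

Lemma dstar_le_newton : s <= b.
Proof.
rewrite leNgt; apply/negP => bs.
have fs_lt0 : fs < 0.
  have := newton_tangent s; rewrite Efs lee_fin => /le_lt_trans; apply.
  by rewrite nmulr_rlt0 // subr_gt0.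
have s_max : argmax f s by case: s_root_or_max => //; rewrite /= Efs => -[]; lra.
have fb_le_fs := s_max b; rewrite Efb Efs lee_fin in fb_le_fs.
have [_ _ Hb h_lt0] := inv_b; rewrite Efb lte_fin in h_lt0.
have : h * (s - b) < 0.
  by rewrite nmulr_rlt0 ?subr_gt0 // h_lt0 // (le_lt_trans fb_le_fs).
have := Hb s; rewrite Efb Efs -EFinD lee_fin; lra.
Qed.

Lemma bregman_newton_lt : fb < 0 -> (bregman f s b < bregman f s a)%E.
Proof.
move=> fb_lt0; have ba := newton_lt.
have a_neq_s : a != s by rewrite gt_eqF // (le_lt_trans dstar_le_newton).
apply: (lt_le_trans _ (bregman_ge_superdiff a_neq_s Efa Efs Ga)).
rewrite tangent_at_a; case: (ltgtP s b) dstar_le_newton => // sb _.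
  apply: le_lt_trans (bregman_le_superdiff sb Efb Efs _) _.
    by move=> h' Hh'; exact: superdiff_anti Efa Efb Ga Hh' ba.
  by rewrite lte_fin ltrD2r gtrDr.
have -> : fs = fb by apply: EFin_inj; rewrite -Efs sb Efb.
by rewrite sb /bregman eqxx subrr mulr0 sub0r lte_fin oppr_gt0.
Qed.

Lemma bregman_newton_root : fb = 0 ->
  [/\ bregman f s b = 0%E, (0 <= bregman f s a)%E &
      bregman f s a = 0%E <-> forall h', superdiff f a h' -> G <= h'].
Proof.
move=> fb0.
have sb : s = b.
  by apply/le_anti; rewrite dstar_le_newton s_maximal //; left; rewrite /= Efb fb0.
have fs0 : fs = 0 by apply: EFin_inj; rewrite -Efs sb Efb fb0.
have a_neq_s : a != s by rewrite sb gt_eqF.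
have sa_lt0 : s - a < 0 by rewrite subr_lt0 sb newton_lt.
have tangent0 : fa + G * (s - a) = 0 by rewrite tangent_at_a sb subrr mulr0.
have Ea : bregman f s a =
    (fa%:E + ereal_sup [set (h' * (s - a))%:E | h' in superdiff f a])%E.
  by rewrite /bregman (negPf a_neq_s) Efa Efs fs0 sube0.
split.
- by rewrite /bregman sb eqxx.
- by have := bregman_ge_superdiff a_neq_s Efa Efs Ga; rewrite tangent0 fs0 subrr.
split=> [Ea0 h' Hh'|Gmin].
  have : (fa%:E + (h' * (s - a))%:E <= bregman f s a)%E.
    by rewrite Ea leeD2l //; apply: ereal_sup_ubound; exists h'.
  by rewrite Ea0 -[0%E]/(0%:E) -EFinD lee_fin -tangent0 lerD2l ler_nM2r.
by rewrite Ea (ereal_sup_mulr_neg Ga sa_lt0 Gmin) -EFinD tangent0.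
Qed.

Lemma bregman_newton_step :
  (bregman f s b <= bregman f s a)%E /\
  (bregman f s b = bregman f s a <->
     G%:E = ereal_inf [set h'%:E | h' in superdiff f a] /\ f b = 0%E).
Proof.
have [_ fb_le0 _ _] := inv_b; rewrite Efb lee_fin in fb_le0.
case: (ltP fb 0) => [fb_lt0|fb_ge0].
  have lt_ba := bregman_newton_lt fb_lt0.
  split; first exact: ltW.
  split=> [E|[_]]; first by move: lt_ba; rewrite E ltxx.
  by rewrite Efb => -[fb0]; move: fb_lt0; rewrite fb0 ltxx.
have fb0 : fb = 0 by apply/le_anti; rewrite fb_le0.
have [-> ge0 Emin] := bregman_newton_root fb0.
split=> //; split=> [/esym/Emin Gmin|[/(EFin_ereal_inf_min Ga) Gmin _]].
  by split; [exact/(EFin_ereal_inf_min Ga) | rewrite Efb fb0].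
exact/esym/Emin.
Qed.

End NewtonStep.
End Supergradients.

Theorem lemma3p3 (R : realType) (f : R -> \bar R) (dstar : R)
  (d g : nat -> R) (i : nat) :
  econcave f -> eproper f ->
  (exists2 x, edom f x & (f x <= 0)%E /\ exists2 h, superdiff f x h & h < 0) ->
  ((exists x, f x = 0%E) \/ (exists x, argmax f x)) ->
  ([set x | f x = 0%E] `|` argmax f) dstar ->
  (forall x, ([set x | f x = 0%E] `|` argmax f) x -> x <= dstar) ->
  (2 <= i)%N -> ND_run_upto f d g i ->
  (bregman f dstar (d i) <= bregman f dstar (d i.-1))%E /\
  (bregman f dstar (d i) = bregman f dstar (d i.-1) <->
     ((g i.-1)%:E = ereal_inf [set h%:E | h in superdiff f (d i.-1)] /\
      f (d i) = 0%E)).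
Proof.
move=> _ fP _ _ s_in s_max i_ge2 run.
case: i i_ge2 run => [|[|k]] // _ run /=.
have [_ _ _ _ steps] := run.
have [fa_neq0 Eb _ _ _] := steps k.+1 isT (ltnSn _).
have [fin_a fa_le0 Ga G_lt0] := ND_run_invariant fP run (j := k.+1) (leqnSn _).
have fa_lt0 : (f (d k.+1) < 0)%E by rewrite lt_neqAle fa_neq0.
have inv_b := ND_run_invariant fP run (j := k.+2) (leqnn _).
have [fin_b _ _ _] := inv_b.
have Efa := esym (fineK fin_a).
have Efb := esym (fineK fin_b).
have Efs := esym (fineK (eproper_root_or_argmax_fin fP s_in)).
apply: (bregman_newton_step Efa Efb Efs _ (G_lt0 fa_lt0) Ga Eb inv_b s_in s_max).
by rewrite -lte_fin -Efa.
Qed.
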